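(* Let $G$ be a group with a conjugation-closed generating set $X$ and let $g\in\mathrm{Mon}(X)$. If $x_1,\dots,x_n\in\mathrm{Mon}(X)$ satisfy $x_1\cdots x_n=g$ and $\ell(x_1)+\cdots+\ell(x_n)=\ell(g)$, then for any integers $1\le i_1<\cdots<i_k\le n$ we have $x_{i_1}\cdots x_{i_k}\in[1,g]$.
   Context: $\mathrm{Mon}(X)$ is the submonoid of $G$ generated by $X$; for $h\in\mathrm{Mon}(X)$, $\ell(h)$ is the minimal length of a product of elements of $X$ equal to $h$. For $h,g\in\mathrm{Mon}(X)$, $h\le g$ means there is $h'\in\mathrm{Mon}(X)$ with $hh'=g$ and $\ell(h)+\ell(h')=\ell(g)$; $[1,g]=\{h\in\mathrm{Mon}(X):h\le g\}$. *)

From Stdlib Require Import List Arith Lia Classical ClassicalEpsilon.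
Import ListNotations.

Record Group := {
  carrier :> Type;
  gmul : carrier -> carrier -> carrier;
  gone : carrier;
  ginv : carrier -> carrier;
  gmulA : forall a b c, gmul a (gmul b c) = gmul (gmul a b) c;
  gmul1l : forall a, gmul gone a = a;
  gmul1r : forall a, gmul a gone = a;
  gmulVl : forall a, gmul (ginv a) a = gone;
  gmulVr : forall a, gmul a (ginv a) = gone
}.

Section Defs.
Variable G : Group.

Definition gprod (w : list G) : G := fold_right (gmul G) (gone G) w.

Definition generates (X : carrier G -> Prop) : Prop :=
  forall g : carrier G, exists w : list (bool * carrier G),
    Forall (fun p => X (snd p)) w /\
    g = gprod (map (fun p : bool * carrier G => if fst p then ginv G (snd p) else snd p) w).

Definition conj_closed (X : G -> Prop) : Prop :=
  forall x g : G, X x -> X (gmul G (gmul G (ginv G g) x) g).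

Definition word_len (X : G -> Prop) (h : G) (n : nat) : Prop :=
  exists w : list G, length w = n /\ Forall X w /\ gprod w = h.

Definition Mon (X : G -> Prop) (h : G) : Prop := exists n, word_len X h n.

Definition is_min_len (X : G -> Prop) (h : G) (n : nat) : Prop :=
  word_len X h n /\ forall m, word_len X h m -> n <= m.

(* l(h): the minimal length of a product of elements of X equal to h
   (meaningful for h in Mon(X); an arbitrary value otherwise) *)
Definition ell (X : G -> Prop) (h : G) : nat :=
  epsilon (inhabits 0) (is_min_len X h).

Definition ple (X : G -> Prop) (h g : G) : Prop :=
  Mon X h /\ Mon X g /\
  exists h', Mon X h' /\ gmul G h h' = g /\ ell X h + ell X h' = ell X g.

Definition interval1 (X : G -> Prop) (g : G) : G -> Prop :=
  fun h => Mon X h /\ ple X h g.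

End Defs.

(** Concatenating reduced words of the [x_j] gives a reduced word [w] of [g],
    since the lengths add up to [l(g)].  The factors [x_(i_1), ..., x_(i_k)]
    spell a subword [s] of [w].  Because [X] is closed under conjugation, each
    letter of [w] left out of [s] can be pushed to the right past the retained
    letters, at the price of conjugating it; hence [g = y z] with
    [y = x_(i_1) ... x_(i_k)] and [z] a product of [|w| - |s|] letters of [X].
    Then [l(g) <= l(y) + l(z) <= |s| + (|w| - |s|) = l(g)], so [y] is in [[1, g]]. *)

From Stdlib Require Import List Arith Lia Sorted Wf_nat Classical ClassicalEpsilon.
Import ListNotations.

Inductive Subword {A : Type} : list A -> list A -> Prop :=
| Subword_nil : Subword [] []
| Subword_keep a s w : Subword s w -> Subword (a :: s) (a :: w)
| Subword_skip a s w : Subword s w -> Subword s (a :: w).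

Lemma Subword_nil_l {A} (w : list A) : Subword [] w.
Proof. induction w; constructor; auto. Qed.

Lemma Subword_app {A} (s1 s2 w1 w2 : list A) :
  Subword s1 w1 -> Subword s2 w2 -> Subword (s1 ++ s2) (w1 ++ w2).
Proof. intros H1 H2; induction H1; simpl; try constructor; auto. Qed.

Lemma Subword_map {A B} (f : A -> B) s w : Subword s w -> Subword (map f s) (map f w).
Proof. induction 1; simpl; constructor; auto. Qed.

Lemma Subword_concat {A} (ss ws : list (list A)) :
  Subword ss ws -> Subword (concat ss) (concat ws).
Proof.
  induction 1; simpl.
  - constructor.
  - apply Subword_app; auto. clear. induction a; constructor; auto.
  - rewrite <- (app_nil_l (concat s)). apply Subword_app; auto using Subword_nil_l.
Qed.

Lemma Forall_Subword {A} (P : A -> Prop) s w : Subword s w -> Forall P w -> Forall P s.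
Proof. induction 1; intros HP; inversion HP; auto. Qed.

Lemma StronglySorted_Subword_seq len : forall a l,
  StronglySorted lt l -> Forall (fun j => a <= j < a + len) l -> Subword l (seq a len).
Proof.
  induction len as [|len IH]; intros a l Hsort Hrange.
  - destruct l as [|j l]; [constructor|].
    inversion Hrange; lia.
  - destruct l as [|j l]; [apply Subword_nil_l|].
    inversion Hsort as [|? ? Hsort' Habove]; inversion Hrange as [|? ? Hj Hrange']; subst.
    assert (Hrest : Forall (fun j' => S a <= j' < S a + len) l).
    { rewrite Forall_forall in Habove, Hrange' |- *.
      intros j' Hj'. specialize (Habove j' Hj'). specialize (Hrange' j' Hj'). lia. }
    simpl. destruct (Nat.eq_dec j a) as [-> | Hne].
    + constructor. auto.
    + constructor. apply IH; auto. constructor; auto. lia.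
Qed.

Lemma increasing_on_lt (f : nat -> nat) s k :
  (forall j, s <= j -> S j < s + k -> f j < f (S j)) ->
  forall j j', s <= j < j' -> j' < s + k -> f j < f j'.
Proof.
  intros Hinc j j' Hj. induction j' as [|j' IH]; intros Hj'; [lia|].
  destruct (Nat.eq_dec j j') as [-> | Hne]; [apply Hinc; lia|].
  specialize (IH ltac:(lia) ltac:(lia)). specialize (Hinc j' ltac:(lia) Hj'). lia.
Qed.

Lemma increasing_on_le (f : nat -> nat) s k :
  (forall j, s <= j -> S j < s + k -> f j < f (S j)) ->
  forall j j', s <= j <= j' -> j' < s + k -> f j <= f j'.
Proof.
  intros Hinc j j' Hj Hj'. destruct (Nat.eq_dec j j') as [-> | Hne]; [lia|].
  apply Nat.lt_le_incl, (increasing_on_lt f s k Hinc); lia.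
Qed.

Lemma StronglySorted_map_seq (f : nat -> nat) k : forall s,
  (forall j j', s <= j < j' -> j' < s + k -> f j < f j') ->
  StronglySorted lt (map f (seq s k)).
Proof.
  induction k as [|k IH]; intros s Hlt; simpl; constructor.
  - apply IH. intros j j' Hj Hj'. apply Hlt; lia.
  - apply Forall_forall. intros y Hy. apply in_map_iff in Hy.
    destruct Hy as [j [<- Hj]]. apply in_seq in Hj. apply Hlt; lia.
Qed.

Lemma least_nat_exists (P : nat -> Prop) :
  (exists n, P n) -> exists n, P n /\ forall m, P m -> n <= m.
Proof.
  intros HP.
  destruct (dec_inh_nat_subset_has_unique_least_element P (fun n => classic (P n)) HP)
    as [n [Hn _]].
  eauto.
Qed.

Section Words.
Variable G : Group.
Variable X : G -> Prop.

Lemma gprod_app (w1 w2 : list G) : gprod G (w1 ++ w2) = gmul G (gprod G w1) (gprod G w2).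
Proof.
  induction w1 as [|a w1 IH]; simpl.
  - now rewrite gmul1l.
  - now rewrite IH, gmulA.
Qed.

Lemma Mon_gprod w : Forall X w -> Mon G X (gprod G w).
Proof. intros Hw. exists (length w), w. auto. Qed.

Lemma ell_spec h : Mon G X h -> is_min_len G X h (ell G X h).
Proof.
  intros Hh. unfold ell. apply epsilon_spec. exact (least_nat_exists _ Hh).
Qed.

Lemma ell_gprod_le w : Forall X w -> ell G X (gprod G w) <= length w.
Proof.
  intros Hw. apply (ell_spec _ (Mon_gprod w Hw)). exists w. auto.
Qed.

Definition reduced_word (h : G) (w : list G) : Prop :=
  Forall X w /\ gprod G w = h /\ length w = ell G X h.

Lemma reduced_word_exists h : Mon G X h -> exists w, reduced_word h w.
Proof.
  intros Hh. destruct (ell_spec h Hh) as [[w [Hlen [HX Hprod]]] _].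
  exists w. repeat split; auto.
Qed.

Lemma ell_mul_le a b :
  Mon G X a -> Mon G X b -> ell G X (gmul G a b) <= ell G X a + ell G X b.
Proof.
  intros Ha Hb.
  destruct (reduced_word_exists a Ha) as [wa [HXa [<- Hla]]].
  destruct (reduced_word_exists b Hb) as [wb [HXb [<- Hlb]]].
  rewrite <- gprod_app, <- Hla, <- Hlb, <- length_app.
  apply ell_gprod_le, Forall_app. auto.
Qed.

Lemma reduced_words_choice (P : nat -> Prop) (x : nat -> G) :
  (forall j, P j -> Mon G X (x j)) ->
  exists W : nat -> list G, forall j, P j -> reduced_word (x j) (W j).
Proof.
  intros Hx. exists (fun j => epsilon (inhabits []) (reduced_word (x j))).
  intros j Hj. apply epsilon_spec, reduced_word_exists, Hx, Hj.
Qed.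

Lemma concat_reduced_words (x : nat -> G) (W : nat -> list G) (l : list nat) :
  (forall j, In j l -> reduced_word (x j) (W j)) ->
  Forall X (concat (map W l)) /\
  gprod G (concat (map W l)) = gprod G (map x l) /\
  length (concat (map W l)) = list_sum (map (fun j => ell G X (x j)) l).
Proof.
  induction l as [|j l IH]; intros HW; simpl; [auto|].
  destruct (HW j (or_introl eq_refl)) as [HXj [Hprodj Hlenj]].
  destruct IH as [HX [Hprod Hlen]]; [intros j' Hj'; apply HW; now right|].
  rewrite gprod_app, length_app, Hprodj, Hprod, Hlenj, Hlen.
  repeat split; auto. apply Forall_app; auto.
Qed.

Hypothesis hconj : conj_closed G X.

Lemma Subword_complement s w :
  Subword s w -> Forall X w ->
  exists t, Forall X t /\ length s + length t = length w /\
            gprod G w = gmul G (gprod G s) (gprod G t).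
Proof.
  induction 1 as [|a s w _ IH|a s w _ IH]; intros Hw.
  - exists []. simpl. now rewrite gmul1r.
  - inversion Hw as [|? ? _ Hw']; subst.
    destruct (IH Hw') as [t [Ht [Hlen Hprod]]].
    exists t. simpl. rewrite Hprod, gmulA. auto.
  - inversion Hw as [|? ? Ha Hw']; subst.
    destruct (IH Hw') as [t [Ht [Hlen Hprod]]].
    set (S := gprod G s) in *.
    (* a * (S * T) = S * ((S^-1 * a * S) * T) *)
    exists (gmul G (gmul G (ginv G S) a) S :: t). simpl. repeat split.
    + constructor; auto.
    + lia.
    + rewrite Hprod, !gmulA, gmulVr, gmul1l. reflexivity.
Qed.

Lemma Subword_reduced_interval1 g w s :
  reduced_word g w -> Subword s w -> interval1 G X g (gprod G s).
Proof.
  intros [Hw [Hprod Hlen]] Hsub.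
  assert (Hs : Forall X s) by exact (Forall_Subword _ _ _ Hsub Hw).
  destruct (Subword_complement s w Hsub Hw) as [t [Ht [Hlen_st Hprod_st]]].
  assert (Hg : Mon G X g) by (rewrite <- Hprod; now apply Mon_gprod).
  pose proof (Mon_gprod s Hs) as Hy.
  pose proof (Mon_gprod t Ht) as Hz.
  pose proof (ell_gprod_le s Hs).
  pose proof (ell_gprod_le t Ht).
  pose proof (ell_mul_le _ _ Hy Hz).
  rewrite <- Hprod_st, Hprod in *.
  repeat split; auto.
  exists (gprod G t). repeat split; auto. lia.
Qed.

End Words.

Theorem lemma2p4 (G : Group) (X : G -> Prop)
  (hgen : generates G X) (hconj : conj_closed G X)
  (g : G) (hg : Mon G X g)
  (n : nat) (x : nat -> G)
  (hx : forall j, 1 <= j <= n -> Mon G X (x j))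
  (hprod : gprod G (map x (seq 1 n)) = g)
  (hlen : list_sum (map (fun j => ell G X (x j)) (seq 1 n)) = ell G X g)
  (k : nat) (i : nat -> nat)
  (hk : 1 <= k)
  (hi1 : 1 <= i 1)
  (hinc : forall j, 1 <= j < k -> i j < i (S j))
  (hik : i k <= n) :
  interval1 G X g (gprod G (map (fun j => x (i j)) (seq 1 k))).
Proof.
  assert (hinc' : forall j, 1 <= j -> S j < 1 + k -> i j < i (S j))
    by (intros; apply hinc; lia).
  assert (hrange : forall j, In j (map i (seq 1 k)) -> 1 <= j <= n).
  { intros j Hj. apply in_map_iff in Hj. destruct Hj as [j' [<- Hj']]. apply in_seq in Hj'.
    pose proof (increasing_on_le i 1 k hinc' 1 j' ltac:(lia) ltac:(lia)).
    pose proof (increasing_on_le i 1 k hinc' j' k ltac:(lia) ltac:(lia)).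
    lia. }
  destruct (reduced_words_choice G X (fun j => 1 <= j <= n) x hx) as [W HW].
  assert (Hw : reduced_word G X g (concat (map W (seq 1 n)))).
  { destruct (concat_reduced_words G X x W (seq 1 n)) as [HX [Hp Hl]].
    - intros j Hj. apply in_seq in Hj. apply HW. lia.
    - red. rewrite Hp, Hl. auto. }
  assert (Hsub : Subword (concat (map W (map i (seq 1 k)))) (concat (map W (seq 1 n)))).
  { apply Subword_concat, Subword_map, StronglySorted_Subword_seq.
    - apply StronglySorted_map_seq, (increasing_on_lt i 1 k hinc').
    - apply Forall_forall. intros j Hj. specialize (hrange j Hj). lia. }
  destruct (concat_reduced_words G X x W (map i (seq 1 k))) as [_ [Hs _]].
  { intros j Hj. apply HW, hrange, Hj. }
  rewrite <- map_map, <- Hs.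
  exact (Subword_reduced_interval1 G X hconj g _ _ Hw Hsub).
Qed.
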